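(* For all positive reals $a,b$, the function $s\mapsto \lambda_s(a,b)$ is monotone increasing on $\mathbb{R}$.
   Context: For $a,b>0$ with $a\neq b$ define $$\lambda_s(a,b)=\begin{cases}\dfrac{s-1}{s+1}\cdot\dfrac{a^{s+1}+b^{s+1}-2\left(\frac{a+b}{2}\right)^{s+1}}{a^s+b^s-2\left(\frac{a+b}{2}\right)^s}, & s\in\mathbb{R}\setminus\{-1,0,1\},\\[3mm] \dfrac{2\log\frac{a+b}{2}-\log a-\log b}{\frac{1}{2a}+\frac{1}{2b}-\frac{2}{a+b}}, & s=-1,\\[3mm] \dfrac{a\log a+b\log b-(a+b)\log\frac{a+b}{2}}{2\log\frac{a+b}{2}-\log a-\log b}, & s=0,\\[3mm] \dfrac{(b-a)^2}{4\left(a\log a+b\log b-(a+b)\log\frac{a+b}{2}\right)}, & s=1,\end{cases}$$ and $\lambda_s(a,a)=a$. (Equivalently $\lambda_s(a,b)=\bar f_{s+1}(a,b)/\bar f_s(a,b)$ where $\bar f(a,b)=f(a)+f(b)-2f(\frac{a+b}{2})$ and $f_s$ is the convex function with $f_s''(t)=t^{s-2}$ given by $f_s(t)=(t^s-st+s-1)/(s(s-1))$ for $s\ne0,1$, $f_0(t)=t-\log t-1$, $f_1(t)=t\log t-t+1$.) *)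

From Stdlib Require Import Reals Lra.
Open Scope R_scope.

Definition amean (a b : R) : R := (a + b) / 2.

Definition lambda (s a b : R) : R :=
  if Req_EM_T a b then a
  else if Req_EM_T s (-1) then
    (2 * ln (amean a b) - ln a - ln b) /
    (1 / (2 * a) + 1 / (2 * b) - 2 / (a + b))
  else if Req_EM_T s 0 then
    (a * ln a + b * ln b - (a + b) * ln (amean a b)) /
    (2 * ln (amean a b) - ln a - ln b)
  else if Req_EM_T s 1 then
    (b - a) ^ 2 / (4 * (a * ln a + b * ln b - (a + b) * ln (amean a b)))
  else
    (s - 1) / (s + 1) *
    ((Rpower a (s + 1) + Rpower b (s + 1) - 2 * Rpower (amean a b) (s + 1)) /
     (Rpower a s + Rpower b s - 2 * Rpower (amean a b) s)).

From Stdlib Require Import Reals Lra.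
From Coquelicot Require Import Coquelicot.
Open Scope R_scope.

(* Monotonicity of s |-> lambda_s(a,b) = gap(s+1)/gap(s), where
   gap(s) = f_s(a) + f_s(b) - 2 f_s((a+b)/2) and f_s'' = x^(s-2).

   1. Peano kernel.  For a < b and m = (a+b)/2, Taylor's formula with integral
      remainder gives  f(a) + f(b) - 2 f(m) = K(f''),  where
        K(g) = int_a^m g(x) (x - a) dx + int_m^b g(x) (b - x) dx.
      K is linear and positive; hence gap(s) = K(x^(s-2)) > 0, and the
      closed forms of gap(s) (generic s, s = 0, s = 1) are read off from
      explicit second antiderivatives of x^(s-2).
   2. Chebyshev-type inequality.  For a positive weight w and phi nondecreasing
      on (0,oo), with c = K(x w)/K(w) one has (x - c)(phi x - phi c) >= 0, and
      integrating against w gives K(x w) K(w phi) <= K(x w phi) K(w).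
      With w = x^(s-2), phi = x^(t-s) this is gap(s+1)/gap(s) <= gap(t+1)/gap(t).
   3. The piecewise definition of lambda agrees with gap(s+1)/gap(s) for a < b;
      the case a = b is trivial and b < a follows by symmetry. *)

Lemma is_derive_eq (f : R -> R) (x l l' : R) :
  is_derive f x l -> l = l' -> is_derive f x l'.
Proof. intros H <-; exact H. Qed.

Definition continuous_between (u v : R) (g : R -> R) : Prop :=
  forall x, u <= x <= v -> continuous g x.

Lemma continuous_between_sub (u v u' v' : R) (g : R -> R) : u <= u' -> v' <= v ->
  continuous_between u v g -> continuous_between u' v' g.
Proof. intros Hu Hv Hg x Hx. apply Hg. lra. Qed.

Lemma continuous_between_mult (u v : R) (g h : R -> R) :
  continuous_between u v g -> continuous_between u v h ->
  continuous_between u v (fun x => g x * h x).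
Proof. intros Hg Hh x Hx. apply (continuous_mult g h); auto. Qed.

Lemma continuous_between_lin (u v k : R) (g h : R -> R) :
  continuous_between u v g -> continuous_between u v h ->
  continuous_between u v (fun x => g x + k * h x).
Proof.
  intros Hg Hh x Hx. apply (continuous_plus g (fun x => k * h x)); [auto |].
  apply (continuous_mult (fun _ => k) h); [apply continuous_const | auto].
Qed.

Lemma continuous_shift (p x : R) : continuous (fun y => y - p) x.
Proof. apply (ex_derive_continuous (fun y => y - p)). auto_derive. exact I. Qed.

Lemma continuous_reflect (p x : R) : continuous (fun y => p - y) x.
Proof. apply (ex_derive_continuous (fun y => p - y)). auto_derive. exact I. Qed.

(* Integration by parts twice against an affine weight h (h' = k):
   int_u^v f'' h = [h f' - k f]_u^v. *)
Lemma RInt_taylor_weight (f f1 g h : R -> R) (k u v : R) : u <= v ->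
  (forall x, is_derive h x k) ->
  (forall x, u <= x <= v ->
     is_derive f x (f1 x) /\ is_derive f1 x (g x) /\ continuous g x) ->
  RInt (fun x => g x * h x) u v = (h v * f1 v - k * f v) - (h u * f1 u - k * f u).
Proof.
  intros Huv Hh H.
  assert (Hbound : forall x, Rmin u v <= x <= Rmax u v -> u <= x <= v).
  { intros x; rewrite Rmin_left, Rmax_right; lra. }
  assert (Hint : is_RInt (fun x => g x * h x) u v
     (minus ((fun x => h x * f1 x - k * f x) v) ((fun x => h x * f1 x - k * f x) u))).
  { apply (is_RInt_derive (fun x => h x * f1 x - k * f x)).
    - intros x Hx. destruct (H x (Hbound x Hx)) as [Hf [Hf1 _]].
      eapply is_derive_eq.
      + apply (is_derive_minus (fun x => h x * f1 x) (fun x => k * f x)).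
        * apply (is_derive_mult h f1); [apply Hh | exact Hf1 | intros; apply Rmult_comm].
        * apply (is_derive_scal f); exact Hf.
      + simpl. unfold minus, plus, mult, opp, scal; simpl. unfold mult; simpl. ring.
    - intros x Hx. destruct (H x (Hbound x Hx)) as [_ [_ Hg]].
      apply (continuous_mult g h); [exact Hg |].
      apply (ex_derive_continuous h). exists k. apply Hh. }
  rewrite (is_RInt_unique _ _ _ _ Hint). unfold minus, plus, opp; simpl. ring.
Qed.

Lemma ex_RInt_weighted (u v : R) (g h : R -> R) : u <= v ->
  continuous_between u v g -> (forall x, continuous h x) ->
  ex_RInt (fun x => g x * h x) u v.
Proof.
  intros Huv Hg Hh. apply (ex_RInt_continuous (V := R_CompleteNormedModule)).
  intros x Hx. rewrite Rmin_left, Rmax_right in Hx by lra.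
  apply (continuous_mult g h); auto.
Qed.

Lemma RInt_weighted_lin (u v k : R) (g1 g2 h : R -> R) : u <= v ->
  continuous_between u v g1 -> continuous_between u v g2 -> (forall x, continuous h x) ->
  RInt (fun x => (g1 x + k * g2 x) * h x) u v
  = RInt (fun x => g1 x * h x) u v + k * RInt (fun x => g2 x * h x) u v.
Proof.
  intros Huv H1 H2 Hh.
  assert (Hg1 : ex_RInt (fun x => g1 x * h x) u v) by (apply ex_RInt_weighted; assumption).
  assert (Hg2 : ex_RInt (fun x => g2 x * h x) u v) by (apply ex_RInt_weighted; assumption).
  rewrite (RInt_ext (V := R_CompleteNormedModule) (fun x => (g1 x + k * g2 x) * h x)
             (fun x => plus (g1 x * h x) (scal k (g2 x * h x))))
    by (intros; unfold plus, scal; simpl; unfold mult; simpl; ring).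
  rewrite (RInt_plus (V := R_CompleteNormedModule)), (RInt_scal (V := R_CompleteNormedModule)).
  - reflexivity.
  - exact Hg2.
  - exact Hg1.
  - apply (ex_RInt_scal (V := R_CompleteNormedModule)), Hg2.
Qed.

Lemma RInt_weighted_ge0 (u v : R) (g h : R -> R) : u <= v ->
  continuous_between u v g -> (forall x, continuous h x) ->
  (forall x, u <= x <= v -> 0 <= g x) -> (forall x, u < x < v -> 0 <= h x) ->
  0 <= RInt (fun x => g x * h x) u v.
Proof.
  intros Huv Hgc Hhc Hg Hh. apply RInt_ge_0; [exact Huv | apply ex_RInt_weighted; auto |].
  intros x Hx. apply Rmult_le_pos; [apply Hg; lra | apply Hh, Hx].
Qed.

Lemma RInt_weighted_gt0 (u v : R) (g h : R -> R) : u < v ->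
  continuous_between u v g -> (forall x, continuous h x) ->
  (forall x, u <= x <= v -> 0 < g x) -> (forall x, u < x < v -> 0 < h x) ->
  0 < RInt (fun x => g x * h x) u v.
Proof.
  intros Huv Hgc Hhc Hg Hh.
  replace 0 with (RInt (fun _ => 0) u v)
    by (rewrite RInt_const; unfold scal; simpl; unfold mult; simpl; ring).
  apply RInt_lt; [exact Huv | | intros; apply continuous_const |].
  - intros x Hx. apply (continuous_mult g h); auto.
  - intros x Hx. apply Rmult_lt_0_compat; [apply Hg; lra | apply Hh, Hx].
Qed.

Section PeanoKernel.

Variables a b : R.
Hypothesis hab : a < b.

Lemma amean_between : a < amean a b < b.
Proof. unfold amean; lra. Qed.

Definition kernel_integral (g : R -> R) : R :=
  RInt (fun x => g x * (x - a)) a (amean a b) + RInt (fun x => g x * (b - x)) (amean a b) b.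

Lemma kernel_integral_taylor (f f1 g : R -> R) :
  (forall x, a <= x <= b ->
     is_derive f x (f1 x) /\ is_derive f1 x (g x) /\ continuous g x) ->
  kernel_integral g = f a + f b - 2 * f (amean a b).
Proof.
  intros H. pose proof amean_between as Hm. unfold kernel_integral.
  rewrite (RInt_taylor_weight f f1 g (fun x => x - a) 1),
          (RInt_taylor_weight f f1 g (fun x => b - x) (-1)).
  - replace (b - amean a b) with (amean a b - a) by (unfold amean; lra). ring.
  all: try lra.
  all: try (intros x; auto_derive; [exact I | ring]).
  all: intros x Hx; apply H; lra.
Qed.

Lemma kernel_integral_ext (g h : R -> R) :
  (forall x, a <= x <= b -> g x = h x) -> kernel_integral g = kernel_integral h.
Proof.
  intros H. pose proof amean_between as Hm. unfold kernel_integral.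
  f_equal; apply RInt_ext; intros x Hx; rewrite Rmin_left, Rmax_right in Hx by lra;
    rewrite H by lra; reflexivity.
Qed.

Lemma kernel_integral_lin (g1 g2 : R -> R) (k : R) :
  continuous_between a b g1 -> continuous_between a b g2 ->
  kernel_integral (fun x => g1 x + k * g2 x) = kernel_integral g1 + k * kernel_integral g2.
Proof.
  intros H1 H2. pose proof amean_between as Hm. unfold kernel_integral.
  rewrite (RInt_weighted_lin _ _ k g1 g2 (fun x => x - a)),
          (RInt_weighted_lin _ _ k g1 g2 (fun x => b - x)).
  - ring.
  all: try lra.
  all: try (apply (continuous_between_sub a b); [lra | lra | assumption]).
  - exact (continuous_reflect b).
  - exact (continuous_shift a).
Qed.

Lemma kernel_integral_ge0 (g : R -> R) : continuous_between a b g ->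
  (forall x, a <= x <= b -> 0 <= g x) -> 0 <= kernel_integral g.
Proof.
  intros Hc Hg. pose proof amean_between as Hm. unfold kernel_integral.
  apply Rplus_le_le_0_compat.
  - apply (RInt_weighted_ge0 a (amean a b) g (fun x => x - a) ltac:(lra)
             (continuous_between_sub a b a (amean a b) g ltac:(lra) ltac:(lra) Hc) (continuous_shift a)).
    + intros x Hx. apply Hg. lra.
    + intros x Hx. lra.
  - apply (RInt_weighted_ge0 (amean a b) b g (fun x => b - x) ltac:(lra)
             (continuous_between_sub a b (amean a b) b g ltac:(lra) ltac:(lra) Hc) (continuous_reflect b)).
    + intros x Hx. apply Hg. lra.
    + intros x Hx. lra.
Qed.

Lemma kernel_integral_gt0 (g : R -> R) : continuous_between a b g ->
  (forall x, a <= x <= b -> 0 < g x) -> 0 < kernel_integral g.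
Proof.
  intros Hc Hg. pose proof amean_between as Hm. unfold kernel_integral.
  apply Rplus_lt_0_compat.
  - apply (RInt_weighted_gt0 a (amean a b) g (fun x => x - a) ltac:(lra)
             (continuous_between_sub a b a (amean a b) g ltac:(lra) ltac:(lra) Hc) (continuous_shift a)).
    + intros x Hx. apply Hg. lra.
    + intros x Hx. lra.
  - apply (RInt_weighted_gt0 (amean a b) b g (fun x => b - x) ltac:(lra)
             (continuous_between_sub a b (amean a b) b g ltac:(lra) ltac:(lra) Hc) (continuous_reflect b)).
    + intros x Hx. apply Hg. lra.
    + intros x Hx. lra.
Qed.

End PeanoKernel.

Lemma monotone_product_nonneg (phi : R -> R) (x c : R) :
  (forall x y, 0 < x <= y -> phi x <= phi y) -> 0 < x -> 0 < c ->
  0 <= (x - c) * (phi x - phi c).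
Proof.
  intros Hphi Hx Hc. destruct (Rle_dec x c) as [Hxc | Hxc].
  - pose proof (Hphi x c ltac:(lra)). nra.
  - pose proof (Hphi c x ltac:(lra)). nra.
Qed.

(* Chebyshev-type inequality for K: tilting a positive weight w by a
   nondecreasing phi does not decrease the K-mean K(x w)/K(w) of x. *)
Lemma kernel_integral_chebyshev (a b : R) (w phi : R -> R) : 0 < a < b ->
  continuous_between a b w -> continuous_between a b phi ->
  (forall x, a <= x <= b -> 0 < w x) ->
  (forall x y, 0 < x <= y -> phi x <= phi y) ->
  kernel_integral a b (fun x => x * w x) * kernel_integral a b (fun x => w x * phi x)
  <= kernel_integral a b (fun x => x * w x * phi x) * kernel_integral a b w.
Proof.
  intros Hab Hw Hphi Hwpos Hmono.
  assert (Hid : continuous_between a b (fun x => x)) by (intros x _; apply continuous_id).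
  assert (Hxw : continuous_between a b (fun x => x * w x))
    by (apply continuous_between_mult; assumption).
  assert (Hwphi : continuous_between a b (fun x => w x * phi x))
    by (apply continuous_between_mult; assumption).
  assert (Hxwphi : continuous_between a b (fun x => x * w x * phi x))
    by (apply continuous_between_mult; assumption).
  set (I := kernel_integral a b).
  assert (Iw : 0 < I w) by (apply kernel_integral_gt0; [lra | assumption | assumption]).
  assert (Ixw : 0 < I (fun x => x * w x)).
  { apply kernel_integral_gt0; [lra | assumption |].
    intros x Hx. apply Rmult_lt_0_compat; [lra | apply Hwpos, Hx]. }
  set (c := I (fun x => x * w x) / I w).
  assert (Hc : 0 < c) by (apply Rdiv_lt_0_compat; assumption).
  (* the pointwise inequality w x (x - c) (phi x - phi c) >= 0, expanded and integrated *)
  assert (Hint : 0 <= I (fun x => (x * w x * phi x + (- c) * (w x * phi x))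
                              + (- phi c) * (x * w x + (- c) * w x))).
  { apply kernel_integral_ge0; [lra | repeat apply continuous_between_lin; assumption |].
    intros x Hx.
    replace (_ + _) with (w x * ((x - c) * (phi x - phi c))) by ring.
    apply Rmult_le_pos; [apply Rlt_le, Hwpos, Hx |].
    apply monotone_product_nonneg; [exact Hmono | lra | exact Hc]. }
  unfold I in Hint.
  rewrite !kernel_integral_lin in Hint; try lra;
    try (repeat apply continuous_between_lin; assumption).
  fold I in Hint.
  (* the choice of c kills the phi c term *)
  assert (Hzero : I (fun x => x * w x) + - c * I w = 0) by (unfold c; field; lra).
  rewrite Hzero in Hint.
  assert (Hineq : c * I (fun x => w x * phi x) <= I (fun x => x * w x * phi x)) by lra.
  unfold c in Hineq.
  apply (Rmult_le_compat_r (I w)) in Hineq; [| lra].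
  replace (I (fun x => x * w x) / I w * I (fun x => w x * phi x) * I w)
    with (I (fun x => x * w x) * I (fun x => w x * phi x)) in Hineq by (field; lra).
  exact Hineq.
Qed.

Lemma is_derive_Rpower (r x : R) : 0 < x ->
  is_derive (fun y => Rpower y r) x (r * Rpower x (r - 1)).
Proof. intros Hx. apply is_derive_Reals, derivable_pt_lim_power, Hx. Qed.

Lemma continuous_Rpower (r x : R) : 0 < x -> continuous (fun y => Rpower y r) x.
Proof.
  intros Hx. apply (ex_derive_continuous (fun y => Rpower y r)).
  eexists. apply is_derive_Rpower, Hx.
Qed.

Lemma continuous_between_Rpower (a b r : R) : 0 < a ->
  continuous_between a b (fun x => Rpower x r).
Proof. intros Ha x Hx. apply continuous_Rpower. lra. Qed.

(* gap a b s = K(x^(s-2)), i.e. the second difference of f_s (f_s'' = x^(s-2)). *)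
Definition gap (a b s : R) : R := kernel_integral a b (fun x => Rpower x (s - 2)).

Section Gap.

Variables a b : R.
Hypothesis hab : 0 < a < b.

Lemma gap_pos (s : R) : 0 < gap a b s.
Proof.
  apply kernel_integral_gt0; [lra | apply continuous_between_Rpower; lra |].
  intros x _. apply exp_pos.
Qed.

(* Closed forms, from the antiderivatives x^s/(s(s-1)), -ln x and x ln x. *)
Lemma gap_generic (s : R) : s <> 0 -> s <> 1 ->
  gap a b s = (Rpower a s + Rpower b s - 2 * Rpower (amean a b) s) / (s * (s - 1)).
Proof.
  intros H0 H1. unfold gap.
  rewrite (kernel_integral_taylor a b ltac:(lra) (fun x => / (s * (s - 1)) * Rpower x s)
                                              (fun x => / (s - 1) * Rpower x (s - 1))).
  - field. split; lra.
  - intros x Hx. split; [|split].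
    + eapply is_derive_eq; [apply is_derive_scal, is_derive_Rpower; lra |].
      field. split; lra.
    + eapply is_derive_eq; [apply is_derive_scal, is_derive_Rpower; lra |].
      replace (s - 1 - 1) with (s - 2) by ring. field. lra.
    + apply continuous_Rpower; lra.
Qed.

Lemma gap_0 : gap a b 0 = 2 * ln (amean a b) - ln a - ln b.
Proof.
  unfold gap.
  rewrite (kernel_integral_taylor a b ltac:(lra) (fun x => - ln x) (fun x => - / x)).
  - ring.
  - intros x Hx. split; [|split].
    + auto_derive; [lra | field; lra].
    + auto_derive; [lra |].
      replace (0 - 2) with (- INR 2) by (simpl; ring).
      rewrite Rpower_Ropp, Rpower_pow by lra. field. lra.
    + apply continuous_Rpower; lra.
Qed.

Lemma gap_1 : gap a b 1 = a * ln a + b * ln b - (a + b) * ln (amean a b).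
Proof.
  unfold gap.
  rewrite (kernel_integral_taylor a b ltac:(lra) (fun x => x * ln x) (fun x => ln x + 1)).
  - unfold amean. field.
  - intros x Hx. split; [|split].
    + auto_derive; [lra | field; lra].
    + auto_derive; [lra |].
      replace (1 - 2) with (- (1)) by ring.
      rewrite Rpower_Ropp, Rpower_1 by lra. field. lra.
    + apply continuous_Rpower; lra.
Qed.

(* Monotonicity of the ratio: Chebyshev with w = x^(s-2), phi = x^(t-s). *)
Lemma gap_ratio_mono (s t : R) : s <= t ->
  gap a b (s + 1) / gap a b s <= gap a b (t + 1) / gap a b t.
Proof.
  intros Hst.
  assert (Hcheb := kernel_integral_chebyshev a b (fun x => Rpower x (s - 2))
                     (fun x => Rpower x (t - s)) hab).
  assert (Hmul : forall r x, 0 < x -> x * Rpower x r = Rpower x (r + 1)).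
  { intros r x Hx. rewrite Rpower_plus, Rpower_1 by exact Hx. ring. }
  assert (E1 : kernel_integral a b (fun x => x * Rpower x (s - 2)) = gap a b (s + 1)).
  { apply kernel_integral_ext; [lra |]. intros x Hx.
    rewrite Hmul by lra. f_equal. ring. }
  assert (E2 : kernel_integral a b (fun x => Rpower x (s - 2) * Rpower x (t - s)) = gap a b t).
  { apply kernel_integral_ext; [lra |]. intros x Hx.
    rewrite <- Rpower_plus. f_equal. ring. }
  assert (E3 : kernel_integral a b (fun x => x * Rpower x (s - 2) * Rpower x (t - s))
               = gap a b (t + 1)).
  { apply kernel_integral_ext; [lra |]. intros x Hx.
    rewrite Hmul, <- Rpower_plus by lra. f_equal. ring. }
  cbv beta in Hcheb. rewrite E1, E2, E3 in Hcheb. fold (gap a b s) in Hcheb.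
  pose proof (gap_pos s). pose proof (gap_pos t).
  apply (Rmult_le_reg_r (gap a b s * gap a b t)); [nra |].
  replace (gap a b (s + 1) / gap a b s * (gap a b s * gap a b t))
    with (gap a b (s + 1) * gap a b t) by (field; lra).
  replace (gap a b (t + 1) / gap a b t * (gap a b s * gap a b t))
    with (gap a b (t + 1) * gap a b s) by (field; lra).
  apply Hcheb.
  - apply continuous_between_Rpower; lra.
  - apply continuous_between_Rpower; lra.
  - intros; apply exp_pos.
  - intros x y Hxy. apply Rle_Rpower_l; lra.
Qed.

Lemma lambda_gap (s : R) : lambda s a b = gap a b (s + 1) / gap a b s.
Proof.
  unfold lambda.
  destruct (Req_EM_T a b) as [E|_]; [lra|].
  assert (Hinv : forall x, 0 < x -> Rpower x (-1) = / x).
  { intros x Hx. replace (-1) with (- (1)) by ring. rewrite Rpower_Ropp, Rpower_1; auto. }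
  assert (Hsq : forall x, 0 < x -> Rpower x 2 = x ^ 2).
  { intros x Hx. replace 2 with (INR 2) by (simpl; ring). apply Rpower_pow, Hx. }
  destruct (Req_EM_T s (-1)) as [E1|N1].
  { subst s. replace (-1 + 1) with 0 by ring. rewrite gap_0.
    replace (1 / (2 * a) + 1 / (2 * b) - 2 / (a + b)) with (gap a b (-1)); [reflexivity |].
    rewrite (gap_generic (-1)), !Hinv by (unfold amean; lra).
    unfold amean. field. lra. }
  destruct (Req_EM_T s 0) as [E0|N0].
  { subst s. replace (0 + 1) with 1 by ring. rewrite gap_0, gap_1. reflexivity. }
  destruct (Req_EM_T s 1) as [E2|N2].
  { subst s. replace (1 + 1) with 2 by ring. rewrite <- gap_1.
    pose proof (gap_pos 1).
    rewrite (gap_generic 2), !Hsq by (unfold amean; lra). unfold amean. field. lra. }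
  pose proof (gap_pos s) as P.
  rewrite (gap_generic s) in P |- * by lra.
  rewrite (gap_generic (s + 1)) by lra.
  replace (s + 1 - 1) with s by ring.
  assert (HA : Rpower a s + Rpower b s - 2 * Rpower (amean a b) s <> 0).
  { intro Z. rewrite Z in P. unfold Rdiv in P. rewrite Rmult_0_l in P. lra. }
  field. repeat split; lra.
Qed.

End Gap.

Lemma lambda_sym (a b s : R) : lambda s a b = lambda s b a.
Proof.
  unfold lambda.
  assert (Hm : amean b a = amean a b) by (unfold amean; field).
  rewrite Hm, (Rplus_comm b a).
  destruct (Req_EM_T a b) as [E|N]; destruct (Req_EM_T b a) as [E'|N']; try lra.
  destruct (Req_EM_T s (-1)); [f_equal; lra |].
  destruct (Req_EM_T s 0); [f_equal; lra |].
  destruct (Req_EM_T s 1); [f_equal; [ring | f_equal; lra] |].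
  f_equal. f_equal; lra.
Qed.

Theorem theorem3 (a b : R) (ha : 0 < a) (hb : 0 < b) :
  forall s t : R, s <= t -> lambda s a b <= lambda t a b.
Proof.
  intros s t Hst.
  destruct (Rtotal_order a b) as [Hlt | [Heq | Hgt]].
  - rewrite !(lambda_gap a b ltac:(lra)). apply gap_ratio_mono; lra.
  - subst b. unfold lambda. destruct (Req_EM_T a a); [lra | congruence].
  - rewrite (lambda_sym a b s), (lambda_sym a b t), !(lambda_gap b a ltac:(lra)).
    apply gap_ratio_mono; lra.
Qed.
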